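(* For all $m,n\ge 3$, the state complexity of $(U_n(d,c,b,a))^R\,(U_m(a,b,c,d))^R$ (which equals $(U_m(a,b,c,d)\,U_n(d,c,b,a))^R$) is $3\cdot 2^{m+n-2}-2^n+1$.
   Context: The state complexity of a regular language is the number of states of its minimal complete DFA. For $n\ge 3$, $\mathcal{U}_n(a,b,c,d)$ is the DFA over $\{a,b,c,d\}$ with states $\{0,\dots,n-1\}$, initial state $0$, final states $\{n-1\}$, where $a$ maps $i\mapsto i+1\pmod n$; $b$ swaps $0$ and $1$ fixing other states; $c$ maps $n-1$ to $0$ fixing other states; $d$ is the identity. $U_n(a,b,c,d)$ is its language. $U_n(d,c,b,a)$ is the language of the DFA with the same states, initial state $0$ and final states $\{n-1\}$, in which $d$ maps $i\mapsto i+1\pmod n$, $c$ swaps $0$ and $1$, $b$ maps $n-1$ to $0$ fixing others, and $a$ is the identity. $L^R$ is the reversal of $L$, and $KL$ is concatenation. *)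

From mathcomp Require Import all_boot.
Set Implicit Arguments. Unset Strict Implicit. Unset Printing Implicit Defensive.

Definition Sigma : finType := 'I_4.
Definition la : Sigma := @Ordinal 4 0 isT.
Definition lb : Sigma := @Ordinal 4 1 isT.
Definition lc : Sigma := @Ordinal 4 2 isT.
Definition ld : Sigma := @Ordinal 4 3 isT.

Definition word := seq Sigma.
Definition lang := word -> Prop.

Record dfa := DFA {
  dstate : finType;
  dinit : dstate;
  dfinal : pred dstate;
  ddelta : dstate -> Sigma -> dstate }.

Definition accepts (A : dfa) (w : word) : bool :=
  @dfinal A (foldl (@ddelta A) (@dinit A) w).

Definition recognizes (A : dfa) (L : lang) : Prop :=
  forall w, L w <-> accepts A w.

Definition state_complexity (L : lang) (k : nat) : Prop :=
  (exists A : dfa, recognizes A L /\ #|dstate A| = k) /\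
  (forall A : dfa, recognizes A L -> k <= #|dstate A|).

Definition rev_lang (L : lang) : lang := fun w => L (rev w).
Definition cat_lang (K L : lang) : lang :=
  fun w => exists u v, w = u ++ v /\ K u /\ L v.

(* U_n(x1,x2,x3,x4): states {0,...,n-1} (as 'I_(n.-1.+1), which is 'I_n for
   n >= 1), initial 0, final {n-1}; x1 : i |-> i+1 mod n; x2 swaps 0 and 1;
   x3 maps n-1 to 0; x4 (and anything else) is the identity. *)
Definition U_delta (n : nat) (x1 x2 x3 : Sigma) (i : 'I_(n.-1.+1)) (s : Sigma)
  : 'I_(n.-1.+1) :=
  if s == x1 then inord ((i.+1) %% n)
  else if s == x2 then
    (if i == 0 :> nat then inord 1 else if i == 1 :> nat then inord 0 else i)
  else if s == x3 then
    (if i == n.-1 :> nat then ord0 else i)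
  else i.

Definition U_dfa (n : nat) (x1 x2 x3 x4 : Sigma) : dfa :=
  @DFA _ (ord0 : 'I_(n.-1.+1)) (fun i => i == ord_max) (@U_delta n x1 x2 x3).

Definition U_lang (n : nat) (x1 x2 x3 x4 : Sigma) : lang :=
  fun w => accepts (U_dfa n x1 x2 x3 x4) w.

From mathcomp Require Import all_boot zify.
Set Implicit Arguments. Unset Strict Implicit. Unset Printing Implicit Defensive.

(* Write K = U_n(d,c,b,a) and L = U_m(a,b,c,d); the language is
   K^R L^R = (L K)^R.  A word w of K^R L^R is recognized by a "reversed
   subset construction": after reading w we record the pair (X, Y) where X is
   the set of states of K from which rev w reaches the final state n-1, and Y
   the set of states j of L such that w = u v with rev u accepted by K and rev v
   leading from j to the final state m-1; then w is accepted iff 0 is in Y.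
   For the two automata at hand, every reachable pair is consistent
   (0 in X forces m-1 in Y) and, conversely, every consistent pair is
   reachable; all pairs with Y full accept every suffix, and any two other
   distinct pairs are separated by a suffix built from powers of a and d.
   Merging the pairs with Y full into one sink gives a DFA with
   3 * 2^(m+n-2) - 2^n + 1 states, and the separating suffixes show, by the
   Myhill-Nerode argument [distinguishable_lower_bound], that no smaller DFA
   recognizes the language. *)

Lemma card_setsT (T : finType) : #|{: {set T}}| = 2 ^ #|T|.
Proof. by rewrite -[in RHS]cardsT -card_powerset powersetT cardsT. Qed.

Lemma card_sets_notin (T : finType) (x : T) :
  #|[set X : {set T} | x \notin X]| = 2 ^ #|T|.-1.
Proof.
have -> : [set X : {set T} | x \notin X] = powerset [set~ x].
  apply/setP=> X; rewrite !inE; apply/idP/subsetP => [hx y hy|sub].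
    by rewrite !inE; apply: contraNneq hx => <-.
  by apply/negP=> /sub; rewrite !inE eqxx.
by rewrite card_powerset cardsC1.
Qed.

Lemma card_sets_in (T : finType) (x : T) :
  #|[set X : {set T} | x \in X]| = 2 ^ #|T| - 2 ^ #|T|.-1.
Proof.
rewrite -card_setsT -(card_sets_notin x) -(cardsC [set X : {set T} | x \notin X]).
by rewrite addKn; apply: eq_card => X; rewrite !inE negbK.
Qed.

Lemma distinguishable_lower_bound (L : lang) (Q : finType) (wit : Q -> word)
    (A : dfa) :
  recognizes A L ->
  (forall q1 q2, q1 != q2 -> exists z, ~ (L (wit q1 ++ z) <-> L (wit q2 ++ z))) ->
  #|Q| <= #|dstate A|.
Proof.
move=> hA hdist; pose g q := foldl (@ddelta A) (@dinit A) (wit q).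
suff g_inj : injective g by exact: leq_card g_inj.
move=> q1 q2 eg; apply/eqP/negPn/negP => /hdist [z []].
have acc q : L (wit q ++ z) <-> dfinal (foldl (@ddelta A) (g q) z).
  by rewrite hA /accepts foldl_cat.
by rewrite !acc eg.
Qed.

(* The reversed subset construction for K^R L^R, for arbitrary automata
   K = (s0, finS, dS) and L = (t0, finT, dT).  The pair (X, Y) reached by w is
   described by [rc_run_fst] and [rc_run_snd]. *)
Section ReversedConcatenation.
Variables (S T : finType) (s0 : S) (finS : pred S) (dS : S -> Sigma -> S).
Variables (t0 : T) (finT : pred T) (dT : T -> Sigma -> T).

Definition rc_state := ({set S} * {set T})%type.

Definition rc_step (p : rc_state) (t : Sigma) : rc_state :=
  ([set i | dS i t \in p.1],
   [set j | (dT j t \in p.2) || ((dS s0 t \in p.1) && finT j)]).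

Definition rc_init : rc_state := ([set i | finS i], [set j | finS s0 && finT j]).

Definition rc_run (w : word) : rc_state := foldl rc_step rc_init w.

Lemma rc_run_cat w z : rc_run (w ++ z) = foldl rc_step (rc_run w) z.
Proof. exact: foldl_cat. Qed.

Lemma rc_run_fst w i : (i \in (rc_run w).1) = finS (foldl dS i (rev w)).
Proof.
elim/last_ind: w i => [|w t IH] i; first by rewrite inE.
by rewrite /rc_run foldl_rcons rev_rcons inE IH.
Qed.

Lemma rc_run_snd w j :
  j \in (rc_run w).2 <->
  exists u v, w = u ++ v /\ finS (foldl dS s0 (rev u)) /\ finT (foldl dT j (rev v)).
Proof.
elim/last_ind: w j => [|w t IH] j.
  rewrite inE; split=> [/andP[h0 hj]|[u [v [/esym/nilP]]]].
    by exists [::], [::].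
  by rewrite cat_nilp => /andP[/nilP -> /nilP ->] /= [-> ->].
rewrite /rc_run foldl_rcons -/(rc_run w) inE rc_run_fst; split.
  case/orP=> [/IH [u [v [-> [hu hv]]]]|/andP[hw hj]].
    by exists u, (rcons v t); rewrite rcons_cat rev_rcons.
  by exists (rcons w t), [::]; rewrite cats0 rev_rcons.
case=> u [v [+ []]]; case/lastP: v => [|v t'].
  by rewrite cats0 => <-; rewrite rev_rcons /= => -> ->; rewrite orbT.
rewrite -rcons_cat => /rcons_inj [ew <-] hu; rewrite rev_rcons /= => hv.
by apply/orP; left; apply/IH; exists u, v.
Qed.

Lemma rc_run_correct w :
  cat_lang (rev_lang (accepts (DFA s0 finS dS))) (rev_lang (accepts (DFA t0 finT dT))) w
  <-> t0 \in (rc_run w).2.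
Proof. exact: iff_sym (rc_run_snd w t0). Qed.

Lemma rc_step_full p t : p.2 = setT -> (rc_step p t).2 = setT.
Proof. by move=> hp; apply/setP=> j; rewrite !inE hp inE. Qed.

Lemma rc_fold_full p z : p.2 = setT -> (foldl rc_step p z).2 = setT.
Proof. by elim: z p => //= t z IH p hp; apply/IH/rc_step_full. Qed.

End ReversedConcatenation.

Section StateComplexity.
Variables n0 m0 : nat.
Local Notation N := n0.+3.
Local Notation M := m0.+3.
Local Notation IK := 'I_N.
Local Notation IL := 'I_M.

Definition dK (i : IK) (s : Sigma) : IK := @U_delta N ld lc lb i s.
Definition dL (j : IL) (s : Sigma) : IL := @U_delta M la lb lc j s.

Local Notation pstate := (rc_state IK IL).
Local Notation step := (rc_step ord0 dK (fun j : IL => j == ord_max) dL).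
Local Notation run :=
  (rc_run ord0 (fun i : IK => i == ord_max) dK (fun j : IL => j == ord_max) dL).

Definition Lang : lang :=
  cat_lang (rev_lang (U_lang N ld lc lb la)) (rev_lang (U_lang M la lb lc ld)).

Lemma Lang_run w : Lang w <-> ord0 \in (run w).2.
Proof. exact: rc_run_correct. Qed.

Lemma run_nil : run [::] = ([set ord_max], set0).
Proof. by congr pair; apply/setP=> j; rewrite !inE. Qed.

Lemma dK_a i : dK i la = i. Proof. by []. Qed.
Lemma dK_d i : dK i ld = inord (i.+1 %% N). Proof. by []. Qed.
Lemma dK_c i : dK i lc = if val i == 0 then inord 1 else if val i == 1 then inord 0 else i.
Proof. by []. Qed.
Lemma dK_b i : dK i lb = if val i == N.-1 then ord0 else i. Proof. by []. Qed.
Lemma dL_a j : dL j la = inord (j.+1 %% M). Proof. by []. Qed.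
Lemma dL_b j : dL j lb = if val j == 0 then inord 1 else if val j == 1 then inord 0 else j.
Proof. by []. Qed.
Lemma dL_c j : dL j lc = if val j == M.-1 then ord0 else j. Proof. by []. Qed.
Lemma dL_d j : dL j ld = j. Proof. by []. Qed.

Lemma dK_cc i : dK (dK i lc) lc = i.
Proof. by case: i => [[|[|k]] hk]; apply/val_inj; rewrite !dK_c /= ?inordK. Qed.

Lemma dL_bb j : dL (dL j lb) lb = j.
Proof. by case: j => [[|[|k]] hk]; apply/val_inj; rewrite !dL_b /= ?inordK. Qed.

(* Subsets of the state sets described by predicates on their values;
   the preimages under the letters are then computed arithmetically. *)
Definition setK (P : nat -> bool) : {set IK} := [set i : IK | P (val i)].
Definition setL (P : nat -> bool) : {set IL} := [set j : IL | P (val j)].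

Lemma eq_setK P Q : (forall k, k < N -> P k = Q k) -> setK P = setK Q.
Proof. by move=> H; apply/setP=> i; rewrite !inE H ?ltn_ord. Qed.
Lemma eq_setL P Q : (forall k, k < M -> P k = Q k) -> setL P = setL Q.
Proof. by move=> H; apply/setP=> i; rewrite !inE H ?ltn_ord. Qed.

Lemma setK_id (X : {set IK}) : X = setK (fun k => inord k \in X).
Proof. by apply/setP=> i; rewrite inE inord_val. Qed.
Lemma setL_id (Y : {set IL}) : Y = setL (fun k => inord k \in Y).
Proof. by apply/setP=> i; rewrite inE inord_val. Qed.

(* [inordK] specialized to the two index types, so that it rewrites
   without unfolding [N] and [M]. *)
Lemma inordK_K k : k < N -> val (inord k : IK) = k. Proof. exact: inordK. Qed.
Lemma inordK_L k : k < M -> val (inord k : IL) = k. Proof. exact: inordK. Qed.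

Lemma modN_lt k : k %% N < N. Proof. by rewrite ltn_pmod. Qed.
Lemma modM_lt k : k %% M < M. Proof. by rewrite ltn_pmod. Qed.

Lemma preimK_d P : [set i | dK i ld \in setK P] = setK (fun k => P (k.+1 %% N)).
Proof. by apply/setP=> i; rewrite !inE dK_d inordK_K // modN_lt. Qed.

Lemma preimK_c P : [set i | dK i lc \in setK P] =
   setK (fun k => P (if k == 0 then 1 else if k == 1 then 0 else k)).
Proof.
apply/setP=> i; rewrite !inE dK_c.
by case: ifP => _; [|case: ifP => _]; rewrite ?inordK_K.
Qed.

Lemma preimK_b P : [set i | dK i lb \in setK P] =
   setK (fun k => P (if k == N.-1 then 0 else k)).
Proof. by apply/setP=> i; rewrite !inE dK_b; case: ifP. Qed.

Lemma preimL_a P : [set j | dL j la \in setL P] = setL (fun k => P (k.+1 %% M)).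
Proof. by apply/setP=> i; rewrite !inE dL_a inordK_L // modM_lt. Qed.

Lemma preimK_cd P :
  [set i | dK i ld \in [set i | dK i lc \in setK P]] =
  setK (fun k => if k == 0 then P 0 else if k == N.-1 then P 1 else P k.+1).
Proof.
rewrite preimK_c preimK_d; apply: eq_setK => k hk.
have [->|k0] := eqVneq k 0; first by rewrite modn_small.
have [->|k1] := eqVneq k N.-1; first by rewrite modnn.
rewrite modn_small; last by lia.
by have -> : (k.+1 == 1) = false by apply/negbTE; lia.
Qed.

(* Rotation of a subset of K by k positions: the effect of d^k on X. *)
Definition rotK k (X : {set IK}) : {set IK} := [set i : IK | inord ((i + k) %% N) \in X].

Lemma rotK_add a b X : rotK a (rotK b X) = rotK (a + b) X.
Proof. by apply/setP=> i; rewrite !inE inordK_K ?modN_lt // modnDml addnA. Qed.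
Lemma rotK0 X : rotK 0 X = X.
Proof. by apply/setP=> i; rewrite !inE addn0 modn_small // inord_val. Qed.
Lemma rotKN X : rotK N X = X.
Proof. by apply/setP=> i; rewrite !inE modnDr modn_small // inord_val. Qed.

Lemma run_dpow k (X : {set IK}) (Y : {set IL}) :
  (foldl step (X, Y) (nseq k ld)).1 = rotK k X /\
  forall j, j \in (foldl step (X, Y) (nseq k ld)).2 <->
     j \in Y \/ (j == ord_max /\ exists2 s, s < k & inord (s.+1 %% N) \in X).
Proof.
elim: k => [|k [IH1 IH2]].
  split=> [|j]; first by rewrite rotK0.
  by split; [left|case=> // [[_ []]]].
rewrite -[k.+1]addn1 nseqD foldl_cat /= IH1; split.
  by rewrite addnC -rotK_add; apply/setP=> i; rewrite !inE dK_d addn1.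
have hd : (dK ord0 ld \in rotK k X) = (inord (k.+1 %% N) \in X).
  by rewrite inE dK_d inordK_K ?modN_lt // modnDml add1n.
move=> j; rewrite inE dL_d hd; split.
  case/orP=> [/IH2 [h|[h1 [s h2 h3]]]|/andP[h /eqP ->]]; first by left.
    by right; split=> //; exists s => //; lia.
  by right; split=> //; exists k => //; lia.
case=> [h|[/eqP -> [s hs hX]]]; first by apply/orP; left; apply/IH2; left.
have [hsk|hsk] := ltnP s k.
  by apply/orP; left; apply/IH2; right; split=> //; exists s.
have esk : s = k by lia.
by subst s; rewrite hX eqxx orbT.
Qed.

Definition rotA k (X : {set IK}) (Y : {set IL}) : {set IL} :=
  [set j : IL | (inord ((j + k) %% M) \in Y) || ((ord0 \in X) && (M - k <= j))].

Lemma run_apow k (X : {set IK}) (Y : {set IL}) : k < M ->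
  foldl step (X, Y) (nseq k la) = (X, rotA k X Y).
Proof.
elim: k => [|k IH] hk.
  congr pair; apply/setP=> j; rewrite inE addn0 modn_small // inord_val.
  by rewrite subn0 leqNgt ltn_ord andbF orbF.
rewrite -[k.+1]addn1 nseqD foldl_cat IH; last by lia.
rewrite /= /rc_step /=; congr pair; first by apply/setP=> i; rewrite inE dK_a.
apply/setP=> j; rewrite !inE dL_a dK_a inordK_L ?modM_lt // modnDml.
have -> : j + (k + 1) = j.+1 + k by lia.
have hj := ltn_ord j.
have [e|ne] := eqVneq (j : nat) M.-1.
  have -> : j == ord_max by apply/eqP/val_inj.
  rewrite e -[M.-1.+1]/M modnn /=.
  have -> : (M - k <= 0) = false by apply/negbTE; lia.
  have -> : (M - (k + 1) <= m0.+2) = true by apply/idP; lia.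
  by case: (_ \in Y); case: (ord0 \in X).
have -> : (j == ord_max) = false by apply/negbTE; apply: contra ne => /eqP ->.
rewrite [j.+1 %% M]modn_small; last by lia.
have -> : (M - k <= j.+1) = (M - (k + 1) <= j) by apply/idP/idP; lia.
by rewrite andbF orbF.
Qed.

Lemma run_apow_test k (X : {set IK}) (Y : {set IL}) : k < M ->
  (ord0 \in (foldl step (X, Y) (nseq k la)).2) = (inord k \in Y).
Proof.
move=> hk; rewrite run_apow //= inE /= add0n modn_small //.
by case: (_ \in Y) => //=; apply/negbTE; rewrite negb_and; apply/orP; right; lia.
Qed.

(* A suffix testing membership in X: a^y (with y not in Y) removes 0 from Y,
   d^(i+n-1) brings i to position 1, reading c then puts m-1 into Y exactly
   when i is in X, and a^(m-1) finally tests m-1. *)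
Lemma separate_X (X : {set IK}) (Y : {set IL}) (y : IL) (i : IK) : y \notin Y ->
  (ord0 \in (foldl step (X, Y)
                (nseq y la ++ nseq (i + N.-1) ld ++ lc :: nseq M.-1 la)).2)
  = (i \in X).
Proof.
move=> hy; rewrite !foldl_cat run_apow //.
have h0 : ord0 \notin rotA y X Y.
  by have := run_apow_test X Y (ltn_ord y); rewrite run_apow // inord_val => ->.
have [D1 D2] := run_dpow (i + N.-1) X (rotA y X Y).
move: D1 D2; case: (foldl step _ _) => X2 Y2 D1 D2; rewrite /= in D1 D2.
have -> : foldl step (X2, Y2) (lc :: nseq M.-1 la) =
    foldl step ((step (X2, Y2) lc).1, (step (X2, Y2) lc).2) (nseq M.-1 la) by [].
rewrite run_apow_test // /rc_step /= inE.
have -> : (inord M.-1 : IL) = ord_max by apply/val_inj; rewrite inordK_L.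
have -> : dL ord_max lc = ord0 by rewrite dL_c /= eqxx.
have -> : (ord0 \in Y2) = false.
  by apply/negbTE/negP=> /D2 [|[]] //; rewrite (negbTE h0).
rewrite eqxx andbT D1 /= dK_c /= inE inordK_K //.
have -> : 1 + (i + n0.+2) = i + N by lia.
by rewrite modnDr modn_small // inord_val.
Qed.

(* Any two distinct pairs whose Y-components are not full are distinguished
   by some suffix: by a^j if they differ at j in Y, by [separate_X] otherwise. *)
Lemma distinguish (p q : pstate) : p.2 != setT -> q.2 != setT -> p != q ->
  exists z, (ord0 \in (foldl step p z).2) != (ord0 \in (foldl step q z).2).
Proof.
case: p q => X Y [X' Y'] /= hY hY' hpq.
have [j hj|eqY] := pickP (fun j => (j \in Y) != (j \in Y')).
  by exists (nseq j la); rewrite !run_apow_test // inord_val.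
have {eqY} eY : Y = Y' by apply/setP=> j; apply/eqP/negbFE/eqY.
subst Y'.
have [i hi|eqX] := pickP (fun i => (i \in X) != (i \in X')); last first.
  by case/eqP: hpq; congr pair; apply/setP=> i; apply/eqP/negbFE/eqX.
have [y hy|fullY] := pickP (fun y => y \notin Y).
  by exists (nseq y la ++ nseq (i + N.-1) ld ++ lc :: nseq M.-1 la); rewrite !separate_X.
by case/eqP: hY; apply/setP=> j; rewrite inE; apply/negbFE/fullY.
Qed.

(* A pair with full Y-component accepts every suffix, unlike any pair whose
   Y-component misses some y (which rejects a^y). *)
Lemma distinguish_full (p q : pstate) : p.2 != setT -> q.2 = setT ->
  exists z, (ord0 \in (foldl step p z).2) != (ord0 \in (foldl step q z).2).
Proof.
case: p => X Y /= hY hq.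
have [y hy|fullY] := pickP (fun y => y \notin Y).
  by exists (nseq y la); rewrite run_apow_test // inord_val rc_fold_full // inE (negbTE hy).
by case/eqP: hY; apply/setP=> j; rewrite inE; apply/negbFE/fullY.
Qed.

Definition reachable (p : pstate) : Prop := exists w, run w = p.

Lemma reachable_fold p z : reachable p -> reachable (foldl step p z).
Proof. by case=> w <-; exists (w ++ z); rewrite rc_run_cat. Qed.

Definition small (Y : {set IL}) : Prop := forall j, j \in Y -> j = ord_max.

Lemma small_step (p : pstate) t : t != la -> small p.2 -> small (step p t).2.
Proof.
move=> ht hY j; rewrite inE /= => /orP[|/andP[_ /eqP //]].
have [->|tld] := eqVneq t ld; first by rewrite dL_d => /hY.
have [->|tlb] := eqVneq t lb.
  rewrite dL_b; case: ifP => [/eqP e|_]; first by move/hY/(congr1 val); rewrite inordK_L.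
  by case: ifP => [/eqP e|_] /hY; [move/(congr1 val); rewrite inordK_L|].
have [->|tlc] := eqVneq t lc.
  rewrite dL_c; case: ifP => [/eqP e|/negbT e]; first by move/hY/(congr1 val).
  by move/hY=> ej; case/negP: e; rewrite ej.
by move: ht tld tlb tlc; case: t => [[|[|[|[|k]]]] hk].
Qed.

Lemma small_fold (p : pstate) w : la \notin w -> small p.2 -> small (foldl step p w).2.
Proof.
elim: w p => //= t w IH p; rewrite inE negb_or => /andP[ht hw] hp.
by apply: IH => //; apply: small_step; rewrite // eq_sym.
Qed.

Lemma a_notin_dpow k : la \notin nseq k ld.
Proof. by rewrite mem_nseq; case: (0 < k). Qed.

(* Building an arbitrary X containing 0.  One round c d (b) shifts the states
   of K down by one, keeping 0, and puts n-1 into X iff the optional b is read. *)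
Definition shift_round (bit : bool) : word := [:: lc; ld] ++ (if bit then [:: lb] else [::]).

Lemma run_shift_round (P : nat -> bool) (Y : {set IL}) (bit : bool) :
  (foldl step (setK P, Y) (shift_round bit)).1 =
  setK (fun k => if k == 0 then P 0
                 else if k == N.-1 then (if bit then P 0 else P 1) else P k.+1).
Proof.
rewrite /shift_round; case: bit; rewrite /= /rc_step /= preimK_cd //.
rewrite preimK_b; apply: eq_setK => k hk.
by have [->|] := eqVneq k N.-1; [rewrite eqxx|move/negbTE => ->].
Qed.

Fixpoint shift_word (S : nat -> bool) (t : nat) : word :=
  if t is t'.+1 then shift_word S t' ++ shift_round (S t) else [::].

(* After t rounds the bits S 1, ..., S t occupy the top t states of K. *)
Definition shift_set (S : nat -> bool) (t : nat) : {set IK} :=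
  setK (fun k => (k == 0) || ((N - t <= k) && S (k + t + 1 - N))).

Lemma run_shift_word S t (Y : {set IL}) : t < N ->
  (foldl step (setK (fun k => k == 0), Y) (shift_word S t)).1 = shift_set S t.
Proof.
elim: t => [|t IH] ht /=.
  by apply: eq_setK => k hk; rewrite leqNgt hk orbF.
rewrite foldl_cat [foldl _ _ (shift_word S t)]surjective_pairing IH; last by lia.
rewrite run_shift_round; apply: eq_setK => k hk /=.
have [//|k0] := eqVneq k 0.
have [ek|k1] := eqVneq k N.-1.
  have -> : k + t.+1 + 1 - N = t.+1 by lia.
  have -> : N - t.+1 <= k by lia.
  by case: (S t.+1) => //=; apply/negbTE; rewrite negb_and; apply/orP; left; lia.
have -> : (N - t <= k.+1) = (N - t.+1 <= k) by apply/idP/idP; lia.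
by have -> : k.+1 + t + 1 - N = k + t.+1 + 1 - N by lia.
Qed.

Lemma small_shift_word S t (p : pstate) : small p.2 -> small (foldl step p (shift_word S t)).2.
Proof.
apply: small_fold; elim: t => //= t IH.
by rewrite mem_cat negb_or IH /shift_round; case: (S t.+1).
Qed.

(* Every X containing 0 is reachable together with some small Y: first d^(n-1)
   turns the initial X = {n-1} into {0}, then [shift_word] builds X. *)
Lemma reach_with_0 (Z : {set IK}) : ord0 \in Z -> exists Y, small Y /\ reachable (Z, Y).
Proof.
move=> hZ; pose p1 := run (nseq N.-1 ld).
have ep1 : p1 = foldl step ([set ord_max], set0) (nseq N.-1 ld) by rewrite -run_nil.
have hp1 : p1.1 = setK (fun k => k == 0).
  rewrite ep1 (run_dpow N.-1 _ _).1; apply/setP=> i; rewrite !inE.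
  apply/eqP/eqP => [/(congr1 val)|i0]; rewrite /= ?inordK ?modN_lt //.
    have hi := ltn_ord i; case: (posnP i) => // ip.
    have -> : i + n0.+2 = i.-1 + N by lia.
    rewrite modnDr modn_small; lia.
  by apply/val_inj; rewrite /= inordK ?modN_lt // i0 add0n modn_small.
pose S k := inord k \in Z.
exists (foldl step p1 (shift_word S N.-1)).2; split.
  rewrite ep1; apply: small_shift_word; apply: small_fold (a_notin_dpow _) _.
  by move=> j; rewrite inE.
suff -> : Z = (foldl step p1 (shift_word S N.-1)).1.
  by rewrite -surjective_pairing /p1 -rc_run_cat; exists (nseq N.-1 ld ++ shift_word S N.-1).
rewrite (surjective_pairing p1) hp1 run_shift_word // [LHS]setK_id; apply: eq_setK => k hk.
have [->|kp] := posnP k; first by rewrite (_ : inord 0 = ord0) //; apply/val_inj/inordK_K.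
have -> : k + N.-1 + 1 - N = k by lia.
by rewrite /S andbC; case: (inord k \in Z) => //=; apply/esym/idP; lia.
Qed.

(* Rotating with d extends [reach_with_0] to every nonempty X. *)
Lemma reach_nonempty (X : {set IK}) (e : IK) :
  e \in X -> exists Y, small Y /\ reachable (X, Y).
Proof.
move=> he; have [|Y [sY rY]] := @reach_with_0 (rotK e X).
  by rewrite inE /= add0n modn_small // inord_val.
exists (foldl step (rotK e X, Y) (nseq (N - e) ld)).2; split.
  by apply: small_fold (a_notin_dpow _) _.
have := reachable_fold (nseq (N - e) ld) rY.
by rewrite [foldl _ _ _]surjective_pairing (run_dpow _ _ _).1 rotK_add subnK ?rotKN // ltnW.
Qed.

Lemma run_cc (X : {set IK}) (Y : {set IL}) : ord0 \notin X -> small Y ->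
  foldl step (X, Y) [:: lc; lc] = (X, set0).
Proof.
move=> h0 hY; have hs1 : small (step (X, Y) lc).2 := small_step (p := (X, Y)) (t := lc) isT hY.
rewrite /= /rc_step /=; congr pair; first by apply/setP=> i; rewrite !inE dK_cc.
apply/setP=> j; rewrite in_set0 inE; apply/negbTE; rewrite negb_or; apply/andP.
split; last by rewrite inE dK_cc (negbTE h0).
apply/negP => /hs1; rewrite dL_c; case: ifP => [_ /(congr1 val) //|/negbT h e].
by case/negP: h; rewrite e.
Qed.

Lemma step_a_no0 (X : {set IK}) (Y : {set IL}) : ord0 \notin X ->
  step (X, Y) la = (X, [set j | dL j la \in Y]).
Proof.
move=> h0; rewrite /rc_step /=; congr pair; apply/setP=> i; rewrite !inE ?dK_a //.
by rewrite (negbTE h0) /= orbF.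
Qed.

Lemma run_dN (X : {set IK}) (Y : {set IL}) (e : IK) : e \in X ->
  foldl step (X, Y) (nseq N ld) = (X, Y :|: [set ord_max]).
Proof.
move=> he; have [D1 D2] := run_dpow N X Y.
rewrite (surjective_pairing (foldl _ _ _)) D1 rotKN; congr pair.
apply/setP=> j; rewrite !inE; apply/idP/idP.
  by move/D2=> [->|[->]] //; rewrite orbT.
case/orP=> h; apply/D2; [by left|right; split=> //].
have [e0|ep] := posnP e.
  exists N.-1 => //; rewrite modnn.
  by have <- : e = inord 0 by apply/val_inj; rewrite /= inordK.
exists e.-1; first by have := ltn_ord e; lia.
by rewrite prednK // modn_small // inord_val.
Qed.

(* Building an arbitrary Y once X is nonempty and avoids 0: each round a (d^n)
   rotates Y and adds m-1 to it iff d^n is read. *)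
Definition fill_round (bit : bool) : word := la :: (if bit then nseq N ld else [::]).

Lemma run_fill_round (X : {set IK}) (e : IK) (P : nat -> bool) (bit : bool) :
  ord0 \notin X -> e \in X ->
  foldl step (X, setL P) (fill_round bit) =
  (X, setL (fun k => P (k.+1 %% M) || bit && (k == M.-1))).
Proof.
move=> h0 he; rewrite /= step_a_no0 // preimL_a.
case: bit; last by congr pair; apply: eq_setL => k _; rewrite orbF.
by rewrite (run_dN _ he); congr pair; apply/setP=> j; rewrite !inE.
Qed.

Fixpoint fill_word (T : nat -> bool) (t : nat) : word :=
  if t is t'.+1 then fill_word T t' ++ fill_round (T t') else [::].

Lemma run_fill_word T (X : {set IK}) (e : IK) t : ord0 \notin X -> e \in X -> t <= M ->
  foldl step (X, set0) (fill_word T t) = (X, setL (fun k => (M - t <= k) && T (k + t - M))).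
Proof.
move=> h0 he; elim: t => [|t IH] ht.
  by congr pair; apply/setP=> j; rewrite !inE subn0 leqNgt ltn_ord.
rewrite /= foldl_cat IH; last by lia.
rewrite (run_fill_round _ _ h0 he); congr pair; apply: eq_setL => k hk.
have [->|km] := eqVneq k M.-1.
  rewrite modnn andbT; have -> : M.-1 + t.+1 - M = t by lia.
  by rewrite [M - t <= 0]leqNgt subn_gt0 ht /=; apply/esym/andb_idl; lia.
rewrite andbF orbF modn_small; last by lia.
have -> : (M - t <= k.+1) = (M - t.+1 <= k) by apply/idP/idP; lia.
by have -> : k.+1 + t - M = k + t.+1 - M by lia.
Qed.

Lemma reach_no0 (X : {set IK}) (Y : {set IL}) (e : IK) :
  e \in X -> ord0 \notin X -> reachable (X, Y).
Proof.
move=> he h0; have [Y0 [sY0 rY0]] := reach_nonempty he.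
have := reachable_fold [:: lc; lc] rY0; rewrite run_cc // => r.
have := reachable_fold (fill_word (fun k => inord k \in Y) M) r.
rewrite (run_fill_word _ h0 he) //; congr reachable; congr pair.
by rewrite [RHS]setL_id; apply: eq_setL => k hk; rewrite subnn addnK.
Qed.

Definition consistent (p : pstate) : bool := (ord0 \in p.1) ==> (ord_max \in p.2).

(* Every consistent pair whose X is neither empty nor full is reachable:
   rotate X so as to avoid 0, apply [reach_no0], and rotate back with d. *)
Lemma reach_proper (X : {set IK}) (Y : {set IL}) (e u : IK) :
  e \in X -> u \notin X -> consistent (X, Y) -> reachable (X, Y).
Proof.
move=> he hu /implyP hc; case h0: (ord0 \in X); last by apply: (reach_no0 _ he); rewrite h0.
have hu' : (inord ((0 + u) %% N) : IK) = u by rewrite add0n modn_small // inord_val.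
have he' : inord ((e + (N - u)) %% N) \in rotK u X.
  rewrite inE inordK_K ?modN_lt // modnDml -addnA subnK; last exact: ltnW.
  by rewrite modnDr modn_small // inord_val.
have := reachable_fold (nseq (N - u) ld) (reach_no0 Y he' _).
have [D1 D2] := run_dpow (N - u) (rotK u X) Y.
rewrite [foldl _ _ _]surjective_pairing D1 rotK_add subnK ?rotKN; last exact: ltnW.
suff -> : (foldl step (rotK u X, Y) (nseq (N - u) ld)).2 = Y.
  by apply; rewrite inE hu'.
apply/setP=> j; apply/idP/idP => [/D2 [//|[/eqP -> _]]|hj]; first exact: hc.
by apply/D2; left.
Qed.

(* Pairs with X empty or full are obtained from proper ones by reading b,
   which is an involution on L and sends n-1 to 0 in K. *)
Lemma reach_emptyX (Y : {set IL}) : reachable (set0, Y).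
Proof.
have r := @reach_no0 [set ord_max] [set j | dL j lb \in Y] _ (set11 _).
suff -> : (set0, Y) = foldl step ([set ord_max], [set j | dL j lb \in Y]) [:: lb].
  by apply/reachable_fold/r; rewrite inE.
rewrite /= /rc_step /=; congr pair.
  by apply/setP=> i; rewrite !inE dK_b; case: ifP.
by apply/setP=> j; rewrite !inE dL_bb /= orbF.
Qed.

Lemma reach_fullX (Y : {set IL}) : ord_max \in Y -> reachable (setT, Y).
Proof.
move=> hmax.
have r := @reach_proper (setT :\ ord_max) [set j | dL j lb \in Y] ord0 ord_max.
suff -> : (setT, Y) = foldl step (setT :\ ord_max, [set j | dL j lb \in Y]) [:: lb].
  apply/reachable_fold/r; rewrite ?inE ?eqxx ?andbT //.
  by rewrite /consistent !inE dL_b /= hmax.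
rewrite /= /rc_step /=; congr pair.
  apply/setP=> i; rewrite !inE dK_b andbT; case: ifP => //= h.
  by apply/esym/negP=> /eqP/(congr1 val) /= e'; rewrite e' eqxx in h.
apply/setP=> j; rewrite !inE dL_bb dK_b /=.
by case: (eqVneq j ord_max) => [->|]; rewrite ?hmax ?andbF ?orbF.
Qed.

Lemma reach_all (p : pstate) : consistent p -> reachable p.
Proof.
case: p => X Y hc.
have [->|[e he]] := set_0Vmem X; first exact: reach_emptyX.
have [u hu|fullX] := pickP (fun i => i \notin X); first exact: reach_proper he hu hc.
have -> : X = setT by apply/setP=> i; rewrite inE; apply/negbFE/fullX.
by apply: reach_fullX; move: hc => /implyP; apply; apply/negbFE/fullX.
Qed.

Lemma consistent_step (p : pstate) t : consistent (step p t).
Proof. by apply/implyP; rewrite /= !inE => ->; rewrite eqxx orbT. Qed.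

Lemma consistent_run w : consistent (run w).
Proof.
case/lastP: w => [|w t]; first by rewrite run_nil /consistent inE.
by rewrite /rc_run foldl_rcons consistent_step.
Qed.

(* The minimal DFA: the consistent pairs whose Y is not full, plus a single
   sink standing for all pairs with Y full, which accept every suffix. *)
Definition good (p : pstate) : bool := consistent p && (p.2 != setT).

Local Notation qstate := (option {p : pstate | good p}).

Definition qstep (o : qstate) (t : Sigma) : qstate :=
  if o is Some p then insub (step (val p) t) else None.

Definition qfinal (o : qstate) : bool := if o is Some p then ord0 \in (val p).2 else true.

Definition min_dfa : dfa := @DFA qstate (insub (run [::])) qfinal qstep.

Lemma min_dfa_run w : foldl qstep (insub (run [::])) w = insub (run w).
Proof.
elim/last_ind: w => [//|w t IH].
rewrite foldl_rcons IH /rc_run foldl_rcons -/(rc_run _ _ _ _ _ w).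
case: insubP => [u _ <-|] //=; rewrite /good consistent_run negbK => /eqP full.
have full' : (step (run w) t).2 = setT by apply: rc_step_full.
by rewrite insubN // /good negb_and negbK full' eqxx orbT.
Qed.

Lemma min_dfa_recognizes : recognizes min_dfa Lang.
Proof.
move=> w; rewrite Lang_run /accepts /= min_dfa_run.
case: insubP => [u _ <-|] //=.
by rewrite /good consistent_run /= negbK => /eqP ->; rewrite inE.
Qed.

(* Counting: X containing 0 with Y containing m-1 and not full, or X
   avoiding 0 with Y not full. *)
Lemma card_good :
  #|[pred p : pstate | good p]| = 2 ^ N.-1 * (2 ^ M.-1 - 1) + 2 ^ N.-1 * (2 ^ M - 1).
Proof.
pose S1 := [set X : {set IK} | ord0 \in X].
pose S0 := [set X : {set IK} | ord0 \notin X].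
pose T1 := [set Y : {set IL} | (ord_max \in Y) && (Y != setT)].
pose T0 := [set Y : {set IL} | Y != setT].
have E : [pred p : pstate | good p] =i setX S1 T1 :|: setX S0 T0.
  case=> X Y; rewrite !inE /good /consistent /=.
  by case: (ord0 \in X); case: (ord_max \in Y); case: (Y != setT).
rewrite (eq_card E) cardsU !cardsX.
have -> : #|setX S1 T1 :&: setX S0 T0| = 0.
  apply/eqP; rewrite cards_eq0; apply/eqP/setP=> [[X Y]]; rewrite !inE.
  by case: (ord0 \in X); rewrite ?andbF.
have cS1 : #|S1| = 2 ^ N.-1 by rewrite card_sets_in card_ord expnS -[N.-1]/(n0.+2); lia.
have cS0 : #|S0| = 2 ^ N.-1 by rewrite card_sets_notin card_ord.
have cT0 : #|T0| = 2 ^ M - 1.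
  have := cardsD1 [set: IL] [set: {set IL}].
  rewrite cardsT card_setsT card_ord in_setT => ->.
  by rewrite add1n subSS subn0; apply: eq_card => Y; rewrite !inE andbT.
have cT1 : #|T1| = 2 ^ M.-1 - 1.
  have := cardsD1 [set: IL] [set Y : {set IL} | ord_max \in Y].
  rewrite card_sets_in card_ord !inE => h.
  have -> : #|T1| = #|[set Y : {set IL} | ord_max \in Y] :\ [set: IL]|.
    by apply: eq_card => Y; rewrite !inE andbC.
  move: h; rewrite expnS -[M.-1]/(m0.+2); lia.
rewrite cS1 cS0 cT0 cT1 subn0 -[M.-1]/(m0.+2) -[N.-1]/(n0.+2); lia.
Qed.

Lemma card_qstate : #|{: qstate}| = 3 * 2 ^ (M + N - 2) - 2 ^ N + 1.
Proof.
rewrite card_option card_sig card_good -[N.-1]/(n0.+2) -[M.-1]/(m0.+2).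
have -> : 2 ^ (M + N - 2) = 2 ^ m0.+2 * 2 ^ n0.+2 by rewrite -expnD; congr (2 ^ _); lia.
rewrite [2 ^ N]expnS [2 ^ M]expnS.
have ha : 0 < 2 ^ n0.+2 by rewrite expn_gt0.
have hb : 0 < 2 ^ m0.+2 by rewrite expn_gt0.
nia.
Qed.

Definition rep (o : qstate) : pstate := if o is Some p then val p else (set0, setT).

Lemma rep_consistent o : consistent (rep o).
Proof.
case: o => [p|] /=; last by rewrite /consistent inE.
by case/andP: (valP p).
Qed.

Lemma rep_distinguishable o1 o2 : o1 != o2 ->
  exists z, (ord0 \in (foldl step (rep o1) z).2) != (ord0 \in (foldl step (rep o2) z).2).
Proof.
have notfull (p : {p : pstate | good p}) : (val p).2 != setT by case/andP: (valP p).
case: o1 o2 => [p|] [q|] //= ne.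
- apply: distinguish (notfull p) (notfull q) _.
  by apply: contraNneq ne => e; rewrite (val_inj e).
- exact: distinguish_full (notfull p) _.
- by have [z hz] := @distinguish_full (val q) (set0, setT) (notfull q) erefl; exists z; rewrite eq_sym.
Qed.

Lemma min_dfa_lower (A : dfa) : recognizes A Lang -> #|{: qstate}| <= #|dstate A|.
Proof.
move=> hA; have reach_rep o : exists w, run w == rep o.
  by have [w ew] := reach_all (rep_consistent o); exists w; rewrite ew.
apply: (distinguishable_lower_bound (wit := fun o => xchoose (reach_rep o)) hA).
move=> o1 o2 /rep_distinguishable [z hz]; exists z.
rewrite !Lang_run !rc_run_cat !(eqP (xchooseP (reach_rep _))) => -[h1 h2].
by case/negP: hz; apply/eqP; apply/idP/idP; [exact: h1 | exact: h2].
Qed.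

End StateComplexity.

Theorem theorem6 (m n : nat) (hm : 3 <= m) (hn : 3 <= n) :
  state_complexity
    (cat_lang (rev_lang (U_lang n ld lc lb la)) (rev_lang (U_lang m la lb lc ld)))
    (3 * 2 ^ (m + n - 2) - 2 ^ n + 1).
Proof.
case: n hn => [|[|[|n0]]] // _; case: m hm => [|[|[|m0]]] // _.
split; first by exists (min_dfa n0 m0); split; [exact: min_dfa_recognizes | exact: card_qstate].
by move=> A hA; rewrite -card_qstate; exact: min_dfa_lower.
Qed.
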